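(* Let $\mathcal{Q}$, $\mathcal{S}$, $\mathcal{A}$ be countable sets (questions, solutions, answers), let $\mathcal{D}$ be a probability distribution on $\mathcal{Q}$, and let $a^*:\mathcal{Q}\to\mathcal{A}$ assign to each question its reference answer. For each $q$, let $\pi_\theta(\cdot\mid q)$ be a probability distribution on $\mathcal{S}$ and for each $s$ let $\pi_\theta(\cdot\mid s,q)$ be a probability distribution on $\mathcal{A}$, with joint law $\pi_\theta(s,a\mid q)=\pi_\theta(s\mid q)\pi_\theta(a\mid s,q)$ and answer marginal $\pi_\theta(a\mid q)=\sum_s\pi_\theta(s\mid q)\pi_\theta(a\mid s,q)$. For $a$ with $\pi_\theta(a\mid q)>0$ define $\pi_\theta(s'\mid q,a)=\pi_\theta(s'\mid q)\pi_\theta(a\mid s',q)/\pi_\theta(a\mid q)$ and the conditional expectation reward $$\rho(a,a^*(q))=\sum_{s'\in\mathcal{S}}\pi_\theta(s'\mid q,a)\,\pi_\theta(a^*(q)\mid s',q).$$ Then $$\mathcal{L}_\rho(\theta):=\mathbb{E}_{q\sim\mathcal{D},\,(s,a)\sim\pi_\theta(\cdot\mid q)}\big[\rho(a,a^*(q))\big]=\mathbb{E}_{q\sim\mathcal{D},\,(s,a)\sim\pi_\theta(\cdot\mid q)}\big[\mathbb{I}(a=a^*(q))\big],$$ where $\mathbb{I}(a=a^*(q))$ is $1$ if $a=a^*(q)$ and $0$ otherwise.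
   Context: Here $\rho(a,a^* )$ is the conditional expectation reward (CER): the expected likelihood, under the policy, of generating the reference answer $a^*$ from a solution drawn from the posterior over solutions given that the answer $a$ was generated. It is only evaluated at answers $a$ that occur with positive probability, so the left-hand expectation is well defined. *)

From HB Require Import structures.
From mathcomp Require Import all_boot all_order all_algebra.
From mathcomp Require Import all_classical all_reals all_analysis.
Set Implicit Arguments. Unset Strict Implicit. Unset Printing Implicit Defensive.
Import Order.TTheory GRing.Theory Num.Theory.
Local Open Scope classical_set_scope.
Local Open Scope ring_scope.
Local Open Scope ereal_scope.

Definition is_prob (R : realType) (T : countType) (p : T -> R) : Prop :=
  (forall t, (0 <= p t)%R) /\ \esum_(t in [set: T]) (p t)%:E = 1.

(* answer marginal  pi(a|q) = sum_s pi(s|q) pi(a|s,q)  (real valued; it is <= 1) *)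
Definition marg (R : realType) (Q S A : countType)
  (pS : Q -> S -> R) (pA : Q -> S -> A -> R) (q : Q) (a : A) : R :=
  fine (\esum_(s in [set: S]) (pS q s * pA q s a)%:E).

Definition posterior (R : realType) (Q S A : countType)
  (pS : Q -> S -> R) (pA : Q -> S -> A -> R) (q : Q) (a : A) (s' : S) : R :=
  (pS q s' * pA q s' a / marg pS pA q a)%R.

Definition cer (R : realType) (Q S A : countType)
  (pS : Q -> S -> R) (pA : Q -> S -> A -> R) (q : Q) (a astar : A) : \bar R :=
  \esum_(s' in [set: S]) (posterior pS pA q a s' * pA q s' astar)%:E.

Definition expect (R : realType) (Q S A : countType) (D : Q -> R)
  (pS : Q -> S -> R) (pA : Q -> S -> A -> R) (f : Q -> A -> \bar R) : \bar R :=
  \esum_(q in [set: Q]) \esum_(s in [set: S]) \esum_(a in [set: A])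
     (D q * pS q s * pA q s a)%:E * f q a.

(** Integrating out the solution first, answer [a] carries the weight of its
    marginal [m(a) = pi(a|q)], and [m(a) * rho(a, astar)] equals
    [sum_s pi(s|q) pi(a|s,q) pi(astar|s,q)] (both sides vanish when [m(a) = 0]).
    Summing over [a] and using [sum_a pi(a|s,q) = 1] leaves [m(astar)], which is
    also the expectation of the indicator of [a = astar]. *)
From mathcomp Require Import all_boot all_order all_algebra.
From mathcomp Require Import all_classical all_reals all_analysis.
From mathcomp Require Import ring.
Import Order.TTheory GRing.Theory Num.Theory.
Local Open Scope classical_set_scope.
Local Open Scope ring_scope.
Local Open Scope ereal_scope.

Section esum_extra.
Context {R : realType}.

Lemma term_le_esum (T : choiceType) (I : set T) (a : T -> \bar R) t :
  (forall i, I i -> 0 <= a i) -> I t -> a t <= \esum_(i in I) a i.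
Proof.
move=> a0 It; apply: esum_ge; exists [set t]; last by rewrite fsbig_set1.
by split; [exact: finite_set1 | move=> _ ->].
Qed.

Lemma ge0_mule_esumr (T : choiceType) (I : set T) (x : \bar R) (a : T -> \bar R) :
  0 <= x -> (forall i, 0 <= a i) ->
  x * (\esum_(i in I) a i) = \esum_(i in I) x * a i.
Proof.
case: x => [r||//] x0 a0.
  rewrite /esum -ereal_supZl//; last first.
    by apply/set0P; exists 0; exists set0; [exact: fsets_set0 | rewrite fsbig_set0].
  rewrite image_comp; congr ereal_sup; apply: eq_imagel => X _ /=.
  by rewrite ge0_mule_fsumr.
have [a_eq0|] := pselect (forall i, I i -> a i = 0).
  by rewrite !esum1 ?mule0// => i Ii; rewrite a_eq0 ?mule0.
move=> /existsNP[i /not_implyP[Ii /eqP ai_neq0]].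
have ai_gt0 : 0 < a i by rewrite lt0e ai_neq0 a0.
have lt0_esum : 0 < \esum_(j in I) a j.
  by apply: (lt_le_trans ai_gt0); apply: term_le_esum.
rewrite gt0_mulye//; apply/eqP; rewrite eq_le leey andbT.
rewrite -{1}(gt0_mulye ai_gt0).
by apply: term_le_esum Ii => j _; exact: mule_ge0.
Qed.

Lemma exchange_esum (T1 T2 : choiceType) (f : T1 -> T2 -> \bar R) :
  (forall i j, 0 <= f i j) ->
  \esum_(i in [set: T1]) \esum_(j in [set: T2]) f i j =
  \esum_(j in [set: T2]) \esum_(i in [set: T1]) f i j.
Proof.
move=> f0; rewrite !esum_esum//.
rewrite (reindex_esum ([set: T2] `*`` fun=> [set: T1]) _ (fun x => (x.2, x.1)))//.
split=> //=.
- by move=> [i1 i2] [j1 j2] /= _ _ [] -> ->.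
- by move=> [i1 i2] _ /=; exists (i2, i1).
Qed.

Lemma esum_mul_indicator (T : choiceType) (a : T -> \bar R) t :
  0 <= a t -> \esum_(i in [set: T]) a i * ((i == t)%:R)%:E = a t.
Proof.
move=> at0; rewrite -(esum_set1 at0) [RHS]esum_mkcond; apply: eq_esum => i _.
by rewrite /= in_set1; case: eqP => _; rewrite ?mule1 ?mule0.
Qed.

Lemma is_prob_le1 (T : countType) (p : T -> R) t : is_prob p -> (p t <= 1)%R.
Proof.
move=> [p0 p1]; rewrite -lee_fin -p1.
by apply: term_le_esum => // i _; rewrite lee_fin.
Qed.

End esum_extra.

Section conditional_expectation_reward.
Context {R : realType} {Q S A : countType}.
Variables (pS : Q -> S -> R) (pA : Q -> S -> A -> R).
Hypothesis hS : forall q, is_prob (pS q).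
Hypothesis hA : forall q s, is_prob (pA q s).

Let pS_ge0 q s : (0 <= pS q s)%R. Proof. exact: (hS q).1. Qed.
Let pA_ge0 q s a : (0 <= pA q s a)%R. Proof. exact: (hA q s).1. Qed.

Lemma margE q a :
  (marg pS pA q a)%:E = \esum_(s in [set: S]) (pS q s * pA q s a)%:E.
Proof.
have le1 : \esum_(s in [set: S]) (pS q s * pA q s a)%:E <= 1.
  rewrite -(hS q).2; apply: le_esum => s _; rewrite lee_fin.
  by rewrite -[leRHS]mulr1 ler_wpM2l// is_prob_le1.
rewrite /marg fineK// ge0_fin_numE ?(le_lt_trans le1) ?ltry//.
by apply: esum_ge0 => s _; rewrite lee_fin mulr_ge0.
Qed.

Lemma marg_ge0 q a : (0 <= marg pS pA q a)%R.
Proof. by rewrite -lee_fin margE esum_ge0// => s _; rewrite lee_fin mulr_ge0. Qed.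

Lemma cer_ge0 q a a' : 0 <= cer pS pA q a a'.
Proof.
apply: esum_ge0 => s _; rewrite lee_fin mulr_ge0//.
by rewrite mulr_ge0 ?invr_ge0 ?marg_ge0 ?mulr_ge0.
Qed.

Lemma marg_mul_cer q a a' :
  (marg pS pA q a)%:E * cer pS pA q a a' =
  \esum_(s in [set: S]) (pS q s * pA q s a * pA q s a')%:E.
Proof.
set K := \esum_(s in _) _.
(* Holds even when [marg pS pA q a = 0], since then its inverse is [0]. *)
have -> : cer pS pA q a a' = ((marg pS pA q a)^-1)%:E * K.
  rewrite ge0_mule_esumr ?lee_fin ?invr_ge0 ?marg_ge0//; last first.
    by move=> s; rewrite lee_fin !mulr_ge0.
  by apply: eq_esum => s _; rewrite -EFinM /posterior; congr EFin; ring.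
rewrite muleA -EFinM; have [m0|m_neq0] := eqVneq (marg pS pA q a) 0%R.
  rewrite m0 mul0r mul0e /K esum1// => s _.
  have : (pS q s * pA q s a)%:E <= (marg pS pA q a)%:E.
    by rewrite margE; apply: term_le_esum => // i _; rewrite lee_fin mulr_ge0.
  rewrite m0 lee_fin => le0.
  have -> : (pS q s * pA q s a = 0)%R by apply/le_anti; rewrite le0 mulr_ge0.
  by rewrite mul0r.
by rewrite mulfV// mul1e.
Qed.

Lemma esum_marg_cer q a' :
  \esum_(a in [set: A]) (marg pS pA q a)%:E * cer pS pA q a a' =
  (marg pS pA q a')%:E.
Proof.
under eq_esum do rewrite marg_mul_cer.
rewrite exchange_esum; last by move=> a s; rewrite lee_fin !mulr_ge0.
rewrite margE; apply: eq_esum => s _.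
transitivity ((pS q s * pA q s a')%:E * \esum_(a in [set: A]) (pA q s a)%:E).
  rewrite ge0_mule_esumr ?lee_fin ?mulr_ge0// => [|a]; last by rewrite lee_fin.
  by apply: eq_esum => a _; rewrite -EFinM; congr EFin; ring.
by rewrite (hA q s).2 mule1.
Qed.

Lemma expect_margE (D : Q -> R) (f : Q -> A -> \bar R) :
  (forall q, 0 <= D q)%R -> (forall q a, 0 <= f q a) ->
  expect D pS pA f =
  \esum_(q in [set: Q]) (D q)%:E * \esum_(a in [set: A]) (marg pS pA q a)%:E * f q a.
Proof.
move=> D0 f0; apply: eq_esum => q _.
rewrite exchange_esum; last by move=> s a; rewrite mule_ge0// lee_fin !mulr_ge0.
rewrite ge0_mule_esumr ?lee_fin//; last first.
  by move=> a; rewrite mule_ge0// lee_fin marg_ge0.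
apply: eq_esum => a _; rewrite muleA margE ge0_mule_esumr ?lee_fin//; last first.
  by move=> s; rewrite lee_fin mulr_ge0.
rewrite [RHS]muleC ge0_mule_esumr//; last first.
  by move=> s; rewrite mule_ge0 ?lee_fin ?mulr_ge0.
by apply: eq_esum => s _; rewrite -EFinM mulrA muleC.
Qed.

End conditional_expectation_reward.

Theorem theorem2 (R : realType) (Q S A : countType)
  (D : Q -> R) (astar : Q -> A)
  (pS : Q -> S -> R) (pA : Q -> S -> A -> R)
  (hD : is_prob D)
  (hS : forall q, is_prob (pS q))
  (hA : forall q s, is_prob (pA q s)) :
  expect D pS pA (fun q a => cer pS pA q a (astar q)) =
  expect D pS pA (fun q a => ((a == astar q)%:R)%:E).
Proof.
have D0 := hD.1.
rewrite !(expect_margE _ _ hS hA)//; last by move=> q a; exact: cer_ge0.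
apply: eq_esum => q _; rewrite (esum_marg_cer _ _ hS hA).
by rewrite esum_mul_indicator// lee_fin (marg_ge0 _ _ hS hA).
Qed.
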